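(* Let $C\subseteq\mathbb{F}_2^n$ be a binary linear $[n,k,d]$ code with $\mathbf{1}_n\in C$, whose dual $C^\perp$ has minimum distance $d^\perp$, let $t$ be a positive integer with $$d^\perp-t=\#\{u \mid C_u\neq\emptyset,\ 0<u\le n-t\}=3,$$ and suppose the nonzero weights of $C$ are exactly $d,\ n/2,\ n-d,\ n$ (with $n$ even). If $d^\perp\ge 8$, then $$n^2-(4d+3)n+4d^2+8=0.$$
   Context: $\mathbf{1}_n$ is the all-ones vector; $C^\perp$ is the dual code with respect to the standard inner product; $d^\perp$ is the minimum nonzero weight of $C^\perp$; $C_u=\{c\in C:\mathrm{wt}(c)=u\}$ (Hamming weight). The paper notes that in the case $d^\perp-t=3$ the weight distribution of $C$ is supported on $0,d,n/2,n-d,n$ with $n$ even, and works under this assumption throughout. *)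

From mathcomp Require Import all_boot all_order all_algebra.
Set Implicit Arguments. Unset Strict Implicit. Unset Printing Implicit Defensive.
Import GRing.Theory.
Local Open Scope ring_scope.

Definition word n := 'rV['F_2]_n.

Definition wt n (c : word n) : nat := #|[set i : 'I_n | c 0 i != 0]|.

Definition ones n : word n := const_mx 1.

Definition dotw n (x y : word n) : 'F_2 := \sum_(i < n) x 0 i * y 0 i.

(* a binary linear code: a subset of F_2^n that is an F_2-subspace
   (over F_2, containing 0 and closed under addition suffices) *)
Definition is_linear_code n (C : {set word n}) : Prop :=
  0 \in C /\ (forall x y, x \in C -> y \in C -> x + y \in C).

Definition dual n (C : {set word n}) : {set word n} :=
  [set x | [forall c in C, dotw x c == 0]].

Definition is_min_weight n (S : {set word n}) (m : nat) : Prop :=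
  (exists2 c, c \in S & (c != 0) /\ wt c = m) /\
  (forall c, c \in S -> c != 0 -> (m <= wt c)%N).

(* u is a weight occurring in C, i.e. C_u is nonempty *)
Definition has_weight n (C : {set word n}) (u : nat) : bool :=
  [exists c in C, wt c == u].

(* Write bias c = n - 2 wt c = \sum_i (-1)^(c_i).  Expanding bias c ^ j and using
   orthogonality of characters, \sum_(c in C) bias c ^ j = |C| times the number of
   j-tuples of coordinates whose indicator vectors add up to a word of the dual code.
   For j < d^perp only the tuples adding up to 0 count, so the j-th moment of bias over C
   is |C| / 2^n times the one over the whole space, i.e. the j-th moment of a sum of n
   independent signs: n, 3n^2 - 2n and 15n^3 - 30n^2 + 16n for j = 2, 4, 6.
   The words 0 and 1 have bias n and -n; every other codeword has bias 0 or
   +-(n - 2d).  With y = (n - 2d)^2 the three moment equations are linear in |C| and in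
   Q = the sum of bias^2 over the other codewords; eliminating both leaves
   2 n^3 (n^2 - y) (n - 1) (n - 2) (y - 3n + 8) = 0, hence y = 3n - 8, which is the
   claimed identity.  The condition on the number of weights in (0, n - t] only serves
   to exclude n <= 2 and d = n. *)

From mathcomp Require Import all_boot all_order all_algebra zify ring.
Import GRing.Theory.
Set Implicit Arguments. Unset Strict Implicit. Unset Printing Implicit Defensive.
Local Open Scope ring_scope.

Lemma F2_cases (a : 'F_2) : a = 0 \/ a = 1.
Proof. by case: a => -[|[|]] // ?; [left|right]; apply: val_inj. Qed.

Lemma word_oppE n (x : word n) : - x = x.
Proof. by apply/rowP => i; rewrite mxE; exact/oppr_pchar2/pchar_Fp. Qed.

Definition chi (a : 'F_2) : int := if a == 0 then 1 else -1.

Lemma chi1 : chi 1 = -1. Proof. by []. Qed.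

Lemma chiD : {morph chi : a b / a + b >-> a * b}.
Proof. by move=> a b; case: (F2_cases a) => ->; case: (F2_cases b) => ->. Qed.

Lemma chiE a : chi a = 1 - 2 * (a != 0)%:R.
Proof. by case: (F2_cases a) => ->. Qed.

Definition bias n (c : word n) : int := \sum_(i < n) chi (c 0 i).

Lemma biasE n (c : word n) : bias c = n%:Z - 2 * (wt c)%:Z.
Proof.
rewrite /bias /wt; under eq_bigr do rewrite chiE.
rewrite sumrB -mulr_sumr sumr_const card_ord -natr_sum -sum1_card.
rewrite [in RHS]big_mkcond; under [in RHS]eq_bigr do rewrite inE.
by rewrite !natz.
Qed.

Lemma wt_eq0 n (c : word n) : (wt c == 0%N) = (c == 0).
Proof.
rewrite /wt cards_eq0; apply/eqP/eqP => [A0|->]; last first.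
  by apply/setP => i; rewrite !inE mxE eqxx.
apply/rowP => i; rewrite mxE; apply/eqP.
by have := in_set0 i; rewrite -A0 inE => /negbFE.
Qed.

Lemma wt0 n : wt (0 : word n) = 0%N.
Proof. by apply/eqP; rewrite wt_eq0. Qed.

Lemma wt_le n (c : word n) : (wt c <= n)%N.
Proof. by rewrite /wt -[n in (_ <= n)%N]card_ord max_card. Qed.

Lemma wt_eqn n (c : word n) : (wt c == n) = (c == ones n).
Proof.
have -> : (wt c == n) = ([set i | c 0 i != 0] == setT).
  by rewrite eqEcard subsetT cardsT card_ord eqn_leq wt_le.
apply/eqP/eqP => [AT|->]; last by apply/setP => i; rewrite !inE mxE oner_neq0.
apply/rowP => i; rewrite mxE.
have := in_setT i; rewrite -AT inE.
by case: (F2_cases (c 0 i)) => ->.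
Qed.

Lemma wt_ones n : wt (ones n) = n.
Proof. by apply/eqP; rewrite wt_eqn. Qed.

Lemma linear_code_addr n (C : {set word n}) x y : is_linear_code C ->
  x \in C -> (x + y \in C) = (y \in C).
Proof.
move=> [_ addC] xC; apply/idP/idP => [xyC|]; last exact: addC.
by rewrite -(addKr x y) word_oppE addC.
Qed.

Lemma dotwDr n (v x y : word n) : dotw v (x + y) = dotw v x + dotw v y.
Proof. by rewrite /dotw -big_split; apply: eq_bigr => i _; rewrite mxE mulrDr. Qed.

Lemma sum_chi_dotw n (C : {set word n}) v : is_linear_code C ->
  \sum_(c in C) chi (dotw v c) = if v \in dual C then #|C|%:Z else 0.
Proof.
move=> C_lin; case: ifP => [vC|/negbT].
  rewrite (eq_bigr (fun _ => 1)) ?sumr_const ?natz // => c cC.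
  by move: vC; rewrite inE => /forall_inP /(_ c cC) /eqP ->.
rewrite inE negb_forall_in => /exists_inP [c0 c0C vc0].
have {vc0} vc0 : dotw v c0 = 1 by case: (F2_cases (dotw v c0)) vc0 => ->.
set S := (X in X = _).
suff : S = - S by lia.
rewrite {1}/S (reindex_inj (addrI c0)) /= /S -sumrN.
apply: eq_big => [c|c _]; first exact: linear_code_addr.
by rewrite dotwDr chiD vc0 chi1 mulN1r.
Qed.

Definition parity_word n j (t : 'I_j -> 'I_n) : word n :=
  \row_i \sum_(l < j) (t l == i)%:R.

Lemma dotw_parity_word n j (t : 'I_j -> 'I_n) c :
  dotw (parity_word t) c = \sum_(l < j) c 0 (t l).
Proof.
rewrite /dotw; under eq_bigr do rewrite mxE big_distrl /=.
rewrite exchange_big /=; apply: eq_bigr => l _.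
rewrite (bigD1 (t l)) //= eqxx mul1r big1 ?addr0 // => i.
by rewrite eq_sym => /negPf ->; rewrite mul0r.
Qed.

Lemma wt_parity_word n j (t : 'I_j -> 'I_n) : (wt (parity_word t) <= j)%N.
Proof.
rewrite -[j in (_ <= j)%N]card_ord; apply: leq_trans (leq_image_card t _).
apply: subset_leq_card; apply/subsetP => i; rewrite inE mxE.
apply: contraR => i_notin; apply/eqP/big1 => l _.
by case: eqP => // tl; case/negP: i_notin; rewrite -tl image_f.
Qed.

Lemma dual0 n (C : {set word n}) : 0 \in dual C.
Proof.
by rewrite inE; apply/forall_inP => c _; rewrite /dotw big1 // => i _; rewrite mxE mul0r.
Qed.

Lemma dual_setT n (v : word n) : (v \in dual [set: word n]) = (v == 0).
Proof.
apply/idP/eqP => [|->]; last exact: dual0.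
rewrite inE => /forall_inP vT; apply/rowP => i; rewrite mxE.
move/eqP: (vT (delta_mx 0 i) (in_setT _)); rewrite /dotw (bigD1 i) //= big1 ?addr0.
  by rewrite mxE !eqxx mulr1.
by move=> k ki; rewrite mxE (negPf ki) andbF mulr0.
Qed.

Lemma sum_bias_expn n (C : {set word n}) j : is_linear_code C ->
  \sum_(c in C) bias c ^+ j =
  #|C|%:Z * #|[set t : {ffun 'I_j -> 'I_n} | parity_word t \in dual C]|%:Z.
Proof.
move=> C_lin.
under eq_bigr => c _.
  rewrite -[j in bias c ^+ j]card_ord -prodr_const bigA_distr_bigA /=.
  under eq_bigr => t _ do rewrite -(big_morph chi chiD (erefl : chi 0 = 1)) -dotw_parity_word.
  over.
rewrite exchange_big /=; under eq_bigr do rewrite sum_chi_dotw //.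
by rewrite -big_mkcond sumr_const -mulr_natr natz cardsE mulrC.
Qed.

Lemma sum_bias_expn_code_setT n (C : {set word n}) j : is_linear_code C ->
  (forall v, v \in dual C -> v != 0 -> (j < wt v)%N) ->
  #|{: word n}|%:Z * \sum_(c in C) bias c ^+ j = #|C|%:Z * \sum_(c : word n) bias c ^+ j.
Proof.
move=> C_lin dual_wt; have setT_lin : is_linear_code [set: word n] by split=> *; rewrite inE.
have -> : \sum_(c : word n) bias c ^+ j = \sum_(c in [set: word n]) bias c ^+ j.
  by apply: eq_bigl => c; rewrite in_setT.
rewrite !sum_bias_expn // cardsT mulrCA.
congr (_ * (_ * Posz _)); apply: eq_card => t; rewrite [LHS]inE [RHS]inE dual_setT.
apply/idP/eqP => [tC|->]; last exact: dual0.
apply/eqP; apply: contraTT (wt_parity_word t); rewrite -ltnNge; exact: dual_wt.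
Qed.

Section FullSpaceMoments.

Variable n : nat.

Local Notation N := (#|{: word n}|%:Z).

Definition prefix_bias m (c : word n) : int := \sum_(i < n | (i < m)%N) chi (c 0 i).

Lemma prefix_biasS m (lt_mn : (m < n)%N) c :
  prefix_bias m.+1 c = prefix_bias m c + chi (c 0 (Ordinal lt_mn)).
Proof.
rewrite /prefix_bias (bigD1 (Ordinal lt_mn)) //= addrC; congr (_ + _).
by apply: eq_bigl => i; rewrite ltnS ltn_neqAle andbC.
Qed.

(* Translating by the m-th unit vector fixes prefix_bias m and flips the sign of the
   m-th coordinate, so that sign is independent of prefix_bias m. *)
Lemma sum_prefix_biasS m (F G : int -> int) : (m < n)%N ->
  (forall x, F (x + 1) + F (x - 1) = 2 * G x) ->
  \sum_(c : word n) F (prefix_bias m.+1 c) = \sum_(c : word n) G (prefix_bias m c).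
Proof.
move=> lt_mn FG; set i0 := Ordinal lt_mn.
have flip : \sum_(c : word n) F (prefix_bias m c + chi (c 0 i0)) =
            \sum_(c : word n) F (prefix_bias m c - chi (c 0 i0)).
  rewrite (reindex_inj (addrI (delta_mx 0 i0))) /=; apply: eq_bigr => c _.
  have -> : prefix_bias m (delta_mx 0 i0 + c) = prefix_bias m c.
    apply: eq_bigr => i lt_im; rewrite !mxE.
    have /negPf -> : i != i0 by rewrite -val_eqE neq_ltn lt_im.
    by rewrite andbF add0r.
  by rewrite !mxE !eqxx chiD chi1 mulN1r.
apply: (@mulfI _ 2) => //; rewrite [RHS]mulr_sumr.
under [RHS]eq_bigr => c _.
  rewrite -FG.
  have -> : F (prefix_bias m c + 1) + F (prefix_bias m c - 1) =
            F (prefix_bias m c + chi (c 0 i0)) + F (prefix_bias m c - chi (c 0 i0)).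
    by case: (F2_cases (c 0 i0)) => ->; rewrite ?chi1 ?opprK // addrC.
  over.
under [in LHS]eq_bigr do rewrite prefix_biasS.
by rewrite big_split /= -flip mulr_natl mulr2n.
Qed.

Lemma sum_prefix_bias_moments m : (m <= n)%N ->
  [/\ \sum_(c : word n) prefix_bias m c ^+ 2 = N * m%:Z,
      \sum_(c : word n) prefix_bias m c ^+ 4 = N * (3 * m%:Z ^+ 2 - 2 * m%:Z) &
      \sum_(c : word n) prefix_bias m c ^+ 6 =
        N * (15 * m%:Z ^+ 3 - 30 * m%:Z ^+ 2 + 16 * m%:Z)].
Proof.
elim: m => [_|m IH lt_mn].
  have sum0 j : (0 < j)%N -> \sum_(c : word n) prefix_bias 0 c ^+ j = 0.
    by case: j => // j _; rewrite big1 // => c _; rewrite /prefix_bias big_pred0 // expr0n.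
  by rewrite !sum0 //; split; ring.
have [IH2 IH4 IH6] := IH (ltnW lt_mn).
rewrite (sum_prefix_biasS (F := fun x => x ^+ 2) (G := fun x => x ^+ 2 + 1) lt_mn);
  last by move=> x; ring.
rewrite (sum_prefix_biasS (F := fun x => x ^+ 4)
          (G := fun x => x ^+ 4 + 6 * x ^+ 2 + 1) lt_mn);
  last by move=> x; ring.
rewrite (sum_prefix_biasS (F := fun x => x ^+ 6)
          (G := fun x => x ^+ 6 + 15 * x ^+ 4 + 15 * x ^+ 2 + 1) lt_mn);
  last by move=> x; ring.
rewrite !big_split /= -!mulr_sumr sumr_const IH2 IH4 IH6 -[m.+1]addn1 PoszD !natz.
by split; ring.
Qed.

End FullSpaceMoments.

Lemma sum_bias_moments n :
  [/\ \sum_(c : word n) bias c ^+ 2 = #|{: word n}|%:Z * n%:Z,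
      \sum_(c : word n) bias c ^+ 4 = #|{: word n}|%:Z * (3 * n%:Z ^+ 2 - 2 * n%:Z) &
      \sum_(c : word n) bias c ^+ 6 =
        #|{: word n}|%:Z * (15 * n%:Z ^+ 3 - 30 * n%:Z ^+ 2 + 16 * n%:Z)].
Proof.
have prefix_full j : \sum_(c : word n) bias c ^+ j = \sum_(c : word n) prefix_bias n c ^+ j.
  by apply: eq_bigr => c _; congr (_ ^+ _); apply: eq_bigl => i; rewrite ltn_ord.
by rewrite !prefix_full; apply: sum_prefix_bias_moments.
Qed.

Lemma code_bias_moments n (C : {set word n}) : is_linear_code C ->
  (forall v, v \in dual C -> v != 0 -> (6 < wt v)%N) ->
  [/\ \sum_(c in C) bias c ^+ 2 = #|C|%:Z * n%:Z,
      \sum_(c in C) bias c ^+ 4 = #|C|%:Z * (3 * n%:Z ^+ 2 - 2 * n%:Z) &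
      \sum_(c in C) bias c ^+ 6 = #|C|%:Z * (15 * n%:Z ^+ 3 - 30 * n%:Z ^+ 2 + 16 * n%:Z)].
Proof.
move=> C_lin dual_wt.
have code_setT j : (j <= 6)%N ->
    #|{: word n}|%:Z * \sum_(c in C) bias c ^+ j = #|C|%:Z * \sum_(c : word n) bias c ^+ j.
  move=> le_j6; apply: sum_bias_expn_code_setT => // v vC v_nz.
  exact: leq_ltn_trans le_j6 (dual_wt v vC v_nz).
have card_neq0 : #|{: word n}|%:Z != 0.
  by rewrite (_ : 0 = 0%N%:Z) // eqz_nat -lt0n; apply/card_gt0P; exists 0.
have [S2 S4 S6] := sum_bias_moments n.
by split; apply: (mulfI card_neq0); rewrite code_setT // ?S2 ?S4 ?S6; ring.
Qed.

Lemma moment_elimination (R : comRingType) (n M Q y : R) :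
  2 * n ^+ 2 + Q = M * n ->
  2 * n ^+ 4 + y * Q = M * (3 * n ^+ 2 - 2 * n) ->
  2 * n ^+ 6 + y ^+ 2 * Q = M * (15 * n ^+ 3 - 30 * n ^+ 2 + 16 * n) ->
  2 * n ^+ 3 * (n ^+ 2 - y) * (n - 1) * (n - 2) * (y - 3 * n + 8) = 0.
Proof.
move=> e2 e4 e6; have eQ : Q = M * n - 2 * n ^+ 2 by rewrite -e2; ring.
rewrite eQ in e4 e6.
(* Once Q is eliminated, these cofactors of the last two equations also eliminate M. *)
transitivity ((15 * n ^+ 3 - 30 * n ^+ 2 + 16 * n - y ^+ 2 * n) *
                (2 * n ^+ 4 + y * (M * n - 2 * n ^+ 2) - M * (3 * n ^+ 2 - 2 * n)) -
              (3 * n ^+ 2 - 2 * n - y * n) *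
                (2 * n ^+ 6 + y ^+ 2 * (M * n - 2 * n ^+ 2) -
                 M * (15 * n ^+ 3 - 30 * n ^+ 2 + 16 * n))); first by ring.
by rewrite e4 e6 !subrr !mulr0 subrr.
Qed.

Lemma self_complementary_moment_relation n (C : {set word n}) (y : int) :
  is_linear_code C -> ones n \in C -> (0 < n)%N ->
  (forall v, v \in dual C -> v != 0 -> (6 < wt v)%N) ->
  (forall c, c \in C -> c != 0 -> c != ones n -> bias c ^+ 2 * (bias c ^+ 2 - y) = 0) ->
  2 * n%:Z ^+ 3 * (n%:Z ^+ 2 - y) * (n%:Z - 1) * (n%:Z - 2) * (y - 3 * n%:Z + 8) = 0.
Proof.
move=> C_lin onesC n_gt0 dual_wt bias_sq.
have [S2 S4 S6] := code_bias_moments C_lin dual_wt.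
have ones_neq0 : ones n != 0 by rewrite -wt_eq0 wt_ones -lt0n.
have split_sum (F : word n -> int) : \sum_(c in C) F c =
    F 0 + F (ones n) + \sum_(c in C | (c != 0) && (c != ones n)) F c.
  rewrite (bigD1 0) ?C_lin.1 //= (bigD1 (ones n)) /=; last by rewrite onesC ones_neq0.
  by rewrite addrA; congr (_ + _); apply: eq_bigl => c; rewrite andbA.
have bias0 : bias (0 : word n) = n%:Z by rewrite biasE wt0 mulr0 subr0.
have bias_ones : bias (ones n) = - n%:Z by rewrite biasE wt_ones; ring.
set Q := \sum_(c in C | (c != 0) && (c != ones n)) bias c ^+ 2.
have Q4 : \sum_(c in C | (c != 0) && (c != ones n)) bias c ^+ 4 = y * Q.
  rewrite mulr_sumr; apply: eq_bigr => c /andP[cC /andP[c_nz c_no]].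
  apply/eqP; rewrite -subr_eq0 -(bias_sq c cC c_nz c_no); apply/eqP; ring.
have Q6 : \sum_(c in C | (c != 0) && (c != ones n)) bias c ^+ 6 = y ^+ 2 * Q.
  rewrite mulr_sumr; apply: eq_bigr => c /andP[cC /andP[c_nz c_no]].
  apply/eqP; rewrite -subr_eq0; apply/eqP.
  transitivity (bias c ^+ 2 * (bias c ^+ 2 - y) * (bias c ^+ 2 + y)); first by ring.
  by rewrite bias_sq // mul0r.
apply: (moment_elimination (M := #|C|%:Z) (Q := Q)).
- by rewrite -S2 split_sum bias0 bias_ones; ring.
- by rewrite -S4 split_sum Q4 bias0 bias_ones; ring.
- by rewrite -S6 split_sum Q6 bias0 bias_ones; ring.
Qed.

Lemma weights_nondegenerate n d t (C : {set word n}) : (0 < t)%N ->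
  (forall u : nat, ((0 < u)%N && has_weight C u) =
                   [|| u == d, u == n./2, u == (n - d)%N | u == n]) ->
  #|[set u : 'I_n.+1 | [&& (0 < u)%N, (u <= n - t)%N & has_weight C u]]| = 3%N ->
  (3 <= n)%N && (d < n)%N.
Proof.
move=> t_gt0 weights; set S := [set u | _] => card_S.
have memS (u : 'I_n.+1) : u \in S ->
    [/\ (0 < u)%N, (u < n)%N & [\/ u = d :> nat, u = n./2 :> nat | u = (n - d)%N :> nat]].
  rewrite inE => /and3P[u_gt0 u_le uC].
  have u_lt : (u < n)%N by lia.
  have : (0 < u)%N && has_weight C u by rewrite u_gt0.
  rewrite weights => /or4P[] /eqP u_eq; split => //;
    [by constructor 1 | by constructor 2 | by constructor 3 | by rewrite u_eq ltnn in u_lt].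
have S_le1 (a : nat) : (forall u, u \in S -> u = a :> nat) -> (#|S| <= 1)%N.
  by move=> Sa; apply/card_le1_eqP => u v /Sa ua /Sa va; apply: ord_inj; rewrite ua va.
apply/andP; split; rewrite leqNgt; apply/negP => degenerate;
  suff : (#|S| <= 1)%N by rewrite card_S.
- by apply: (S_le1 1%N) => u /memS[u_gt0 u_lt _]; lia.
- by apply: (S_le1 n./2) => u /memS[u_gt0 u_lt []] //; lia.
Qed.

Theorem proposition4p1 (n k d dperp t : nat) (C : {set word n}) :
  is_linear_code C ->
  #|C| = (2 ^ k)%N ->
  is_min_weight C d ->
  ones n \in C ->
  is_min_weight (dual C) dperp ->
  (0 < t)%N ->
  dperp = (t + 3)%N ->
  #|[set u : 'I_n.+1 | [&& (0 < u)%N, (u <= n - t)%N & has_weight C u]]| = 3%N ->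
  ~~ odd n ->
  (forall u : nat, ((0 < u)%N && has_weight C u) =
                   [|| u == d, u == n./2, u == (n - d)%N | u == n]) ->
  (8 <= dperp)%N ->
  ((n%:Z) ^+ 2 - (4 * d%:Z + 3) * n%:Z + 4 * (d%:Z) ^+ 2 + 8 = 0)%R.
Proof.
move=> C_lin _ [[c1 c1C [c1_nz wt_c1]] _] onesC [_ dual_wt] t_gt0 _ small_weights n_even
  weights dperp_ge8.
have /andP[n_ge3 d_lt_n] := weights_nondegenerate t_gt0 weights small_weights.
have d_gt0 : (0 < d)%N by rewrite -wt_c1 lt0n wt_eq0.
have n_half : n = (n./2).*2 by rewrite -[LHS]odd_double_half (negPf n_even).
set y := (n%:Z - 2 * d%:Z) ^+ 2.
have bias_sq c : c \in C -> c != 0 -> c != ones n -> bias c ^+ 2 * (bias c ^+ 2 - y) = 0.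
  move=> cC c_nz c_no; have : (0 < wt c)%N && has_weight C (wt c).
    by rewrite lt0n wt_eq0 c_nz; apply/existsP; exists c; rewrite cC eqxx.
  rewrite weights wt_eqn (negPf c_no) orbF biasE => /or3P[] /eqP ->.
  - by rewrite subrr mulr0.
  - by rewrite (_ : _ - _ = 0) ?expr0n ?mul0r //; lia.
  - by rewrite (_ : _ - y = 0) ?mulr0 // /y -subzn ?(ltnW d_lt_n) //; ring.
have dual_wt7 v : v \in dual C -> v != 0 -> (6 < wt v)%N.
  by move=> vC v_nz; apply: leq_trans (dual_wt v vC v_nz); apply: leq_trans dperp_ge8.
have := self_complementary_moment_relation C_lin onesC (ltnW (ltnW n_ge3)) dual_wt7 bias_sq.
have -> : n%:Z ^+ 2 - y = 4 * d%:Z * (n%:Z - d%:Z) by rewrite /y; ring.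
have factors_neq0 : 2 * n%:Z ^+ 3 * (4 * d%:Z * (n%:Z - d%:Z)) * (n%:Z - 1) * (n%:Z - 2) != 0.
  by rewrite !mulf_neq0 ?expf_neq0 //; lia.
by move/eqP; rewrite mulf_eq0 (negPf factors_neq0) /= => /eqP <-; rewrite /y; ring.
Qed.
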